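(* For all $x_0,x_1\in\mathbb{R}^n$ and any $F'(x_1)\in\partial F(x_1)$, $$F(x_0)-F(x_1)-\langle F'(x_1),x_0-x_1\rangle\le2\left(\frac{2\|A\|^2\mathcal{D}_{v,Y}}{\sigma_v}\right)^{1/2}\|x_0-x_1\|.$$
   Context: $F(x):=\max_{y\in Y}\{\langle Ax,y\rangle-\hat g(y)\}$ for $x\in\mathbb{R}^n$, where $Y\subseteq\mathbb{R}^m$ is a nonempty convex compact set, $\hat g:Y\to\mathbb{R}$ continuous convex, $A:\mathbb{R}^n\to\mathbb{R}^m$ linear. $\mathbb{R}^n$ carries a norm $\|\cdot\|$, $\mathbb{R}^m$ a norm $\|\cdot\|_Y$, and $\|A\|:=\max\{\langle Ax,y\rangle:\|x\|\le1,\|y\|_Y\le1\}$. $v$ is a prox-function of $Y$: differentiable and strongly convex with modulus $\sigma_v$ w.r.t. $\|\cdot\|_Y$; $\mathcal{D}_{v,Y}:=\max_{y,z\in Y}\{v(y)-v(z)-\langle\nabla v(z),y-z\rangle\}$. *)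

From HB Require Import structures.
From mathcomp Require Import all_boot all_order all_algebra.
From mathcomp Require Import all_classical all_reals all_analysis.
Set Implicit Arguments. Unset Strict Implicit. Unset Printing Implicit Defensive.
Import Order.TTheory GRing.Theory Num.Theory.
Import numFieldNormedType.Exports.
Local Open Scope classical_set_scope.
Local Open Scope ring_scope.

Definition dotv {R : realType} {k : nat} (u w : 'cV[R]_k) : R :=
  \sum_(i < k) u i 0 * w i 0.

Definition is_norm {R : realType} {k : nat} (N : 'cV[R]_k -> R) : Prop :=
  [/\ (forall x, N x = 0 -> x = 0),
      (forall (a : R) x, N (a *: x) = `|a| * N x) &
      (forall x y, N (x + y) <= N x + N y)].

Definition is_max {R : realType} (S : set R) (M : R) : Prop :=
  S M /\ (forall s, S s -> s <= M).

Definition convex_on {R : realType} {k : nat} (Y : set 'cV[R]_k)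
  (f : 'cV[R]_k -> R) : Prop :=
  forall y z (t : R), Y y -> Y z -> 0 <= t <= 1 ->
    f (t *: y + (1 - t) *: z) <= t * f y + (1 - t) * f z.

Definition strongly_convex_on {R : realType} {k : nat} (Y : set 'cV[R]_k)
  (N : 'cV[R]_k -> R) (sigma : R) (f : 'cV[R]_k -> R) : Prop :=
  forall y z (t : R), Y y -> Y z -> 0 <= t <= 1 ->
    f (t *: y + (1 - t) *: z) <=
      t * f y + (1 - t) * f z - sigma / 2 * t * (1 - t) * (N (y - z)) ^+ 2.

Definition subdiff {R : realType} {k : nat} (F : 'cV[R]_k -> R) (x : 'cV[R]_k)
  : set 'cV[R]_k :=
  [set G | forall z, F x + dotv G (z - x) <= F z].

From HB Require Import structures.
From mathcomp Require Import all_boot all_order all_algebra.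
From mathcomp Require Import all_classical all_reals all_analysis.
From mathcomp Require Import ring lra.
Import Order.TTheory GRing.Theory Num.Theory.
Import numFieldNormedType.Exports.
Local Open Scope classical_set_scope.
Local Open Scope ring_scope.

(* Let y0 maximize the defining expression of F at x0 and y2 at the reflected
   point 2 x1 - x0.  Comparing F with these affine minorants, and using the
   subgradient inequality at 2 x1 - x0, bounds the linearization gap by
   <A (x0 - x1), y0 - y2> <= ||A|| ||x0 - x1|| ||y0 - y2||.  Strong convexity
   of v gives sigma/2 ||y - z||^2 <= D_{v,Y} for all y, z in Y, so the diameter
   of Y is at most (2 D_{v,Y} / sigma)^(1/2). *)

Section Slope.
Context {R : realType} {V : normedModType R}.

Lemma derive_le_of_slope_le {f : V -> R} {z d : V} (a c : R) :
  derivable f z d ->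
  (forall h, 0 < h < 1 -> h^-1 * (f (h *: d + z) - f z) <= a + h * c) ->
  'D_d f z <= a.
Proof.
move=> dfz slope.
have slope_cvg : (fun h => h^-1 *: (f (h *: d + z) - f z)) @ 0^'+ --> 'D_d f z.
  by apply: cvg_trans dfz; apply: cvg_app; apply: within_subset => h /= /gt_eqF ->.
have bound_cvg : (fun h => a + h * c) @ 0^'+ --> a.
  apply: cvg_at_right_filter.
  rewrite -[X in _ --> X]addr0 -[X in _ --> _ + X](mul0r c).
  by apply: cvgD; [exact: cvg_cst | apply: cvgM; [exact: cvg_id | exact: cvg_cst]].
apply: (ler_cvg_to slope_cvg bound_cvg).
near=> h; apply: slope; apply/andP; split.
- by near: h; exact: nbhs_right_gt.
- by near: h; apply: nbhs_right_lt; exact: ltr01.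
Unshelve. all: by end_near.
Qed.
End Slope.

Section Norm.
Context {R : realType} {k : nat} {N : 'cV[R]_k -> R}.
Hypothesis normN : is_norm N.

Lemma normv0 : N 0 = 0.
Proof. by case: normN => _ normZ _; rewrite -(scale0r 0) normZ normr0 mul0r. Qed.

Lemma normvN x : N (- x) = N x.
Proof. by case: normN => _ normZ _; rewrite -scaleN1r normZ normrN1 mul1r. Qed.

Lemma normv_ge0 x : 0 <= N x.
Proof.
case: normN => _ _ normD; have := normD x (- x).
by rewrite subrr normv0 normvN; lra.
Qed.

End Norm.

Section Dotv.
Context {R : realType} {k : nat}.
Implicit Types (u w : 'cV[R]_k) (c : R).

Lemma dotv0l w : dotv 0 w = 0.
Proof. by rewrite /dotv big1 // => i _; rewrite mxE mul0r. Qed.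

Lemma dotv0r u : dotv u 0 = 0.
Proof. by rewrite /dotv big1 // => i _; rewrite mxE mulr0. Qed.

Lemma dotvNl u w : dotv (- u) w = - dotv u w.
Proof. by rewrite /dotv -sumrN; apply: eq_bigr => i _; rewrite mxE mulNr. Qed.

Lemma dotvNr u w : dotv u (- w) = - dotv u w.
Proof. by rewrite /dotv -sumrN; apply: eq_bigr => i _; rewrite mxE mulrN. Qed.

Lemma dotvBl u1 u2 w : dotv (u1 - u2) w = dotv u1 w - dotv u2 w.
Proof. by rewrite /dotv -sumrB; apply: eq_bigr => i _; rewrite !mxE mulrBl. Qed.

Lemma dotvBr u w1 w2 : dotv u (w1 - w2) = dotv u w1 - dotv u w2.
Proof. by rewrite /dotv -sumrB; apply: eq_bigr => i _; rewrite !mxE mulrBr. Qed.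

Lemma dotvZl c u w : dotv (c *: u) w = c * dotv u w.
Proof. by rewrite /dotv mulr_sumr; apply: eq_bigr => i _; rewrite mxE mulrA. Qed.

Lemma dotvZr c u w : dotv u (c *: w) = c * dotv u w.
Proof.
by rewrite /dotv mulr_sumr; apply: eq_bigr => i _; rewrite mxE mulrCA.
Qed.

End Dotv.

Section OperatorNorm.
Context {R : realType} {n m : nat}.
Context {Nx : 'cV[R]_n -> R} {NY : 'cV[R]_m -> R} {A : 'M[R]_(m, n)} {normA : R}.
Hypotheses (normNx : is_norm Nx) (normNY : is_norm NY).
Hypothesis normA_max : is_max [set r | exists x y, [/\ Nx x <= 1, NY y <= 1 &
                                         r = dotv (A *m x) y]] normA.

Lemma opnorm_ge0 : 0 <= normA.
Proof.
apply: normA_max.2; exists 0, 0.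
by rewrite mulmx0 dotv0l !normv0 // ler01.
Qed.

Lemma dotv_le_opnorm d w : dotv (A *m d) w <= normA * Nx d * NY w.
Proof.
have [d0|dn0] := eqVneq (Nx d) 0.
  by rewrite d0 mulr0 mul0r; case: normNx => /(_ _ d0) -> _ _; rewrite mulmx0 dotv0l.
have [w0|wn0] := eqVneq (NY w) 0.
  by rewrite w0 mulr0; case: normNY => /(_ _ w0) -> _ _; rewrite dotv0r.
have dp : 0 < Nx d by rewrite lt_def dn0 normv_ge0.
have wp : 0 < NY w by rewrite lt_def wn0 normv_ge0.
have unit_scale k (N : 'cV[R]_k -> R) u : is_norm N -> 0 < N u -> N ((N u)^-1 *: u) = 1.
  by case=> _ normZ _ up; rewrite normZ ger0_norm ?mulVf ?gt_eqF // invr_ge0 ltW.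
have := normA_max.2 ((Nx d)^-1 * ((NY w)^-1 * dotv (A *m d) w)).
rewrite mulrA -invfM ler_pdivrMl ?mulr_gt0 // [_ * normA]mulrC mulrA; apply.
exists ((Nx d)^-1 *: d), ((NY w)^-1 *: w).
by rewrite !unit_scale // -scalemxAr dotvZl dotvZr mulrA invfM.
Qed.

End OperatorNorm.

Lemma strongly_convex_bregman_ge {R : realType} {m : nat} {NY : 'cV[R]_m -> R}
    {Y : set 'cV[R]_m} {v : 'cV[R]_m -> R} {sigma : R} {y z : 'cV[R]_m} :
  differentiable v z -> strongly_convex_on Y NY sigma v -> Y y -> Y z ->
  sigma / 2 * NY (y - z) ^+ 2 <= v y - v z - 'd v z (y - z).
Proof.
move=> dvz vsc Yy Yz; set c := sigma / 2 * NY (y - z) ^+ 2.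
rewrite -deriveE //; suff : 'D_(y - z) v z <= v y - v z - c by lra.
apply: (derive_le_of_slope_le _ c (@diff_derivable _ _ _ _ _ (y - z) dvz)) => h /andP[h0 h1].
have h01 : 0 <= h <= 1 by rewrite !ltW.
have := vsc y z h Yy Yz h01.
have -> : h *: y + (1 - h) *: z = h *: (y - z) + z.
  by apply/matrixP => i j; rewrite !mxE; ring.
by rewrite ler_pdivrMl // /c; lra.
Qed.

Lemma bregman_diam_bound {R : realType} {m : nat} {NY : 'cV[R]_m -> R}
    {Y : set 'cV[R]_m} {v : 'cV[R]_m -> R} {sigma D : R} {y z : 'cV[R]_m} :
  is_norm NY -> (forall z, Y z -> differentiable v z) ->
  0 < sigma -> strongly_convex_on Y NY sigma v ->
  is_max [set r | exists y z, [/\ Y y, Y z &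
                                    r = v y - v z - 'd v z (y - z)]] D ->
  Y y -> Y z -> NY (y - z) <= Num.sqrt (2 * D / sigma).
Proof.
move=> normNY dv sigma_gt0 vsc [_ D_max] Yy Yz.
have bregman_le_D : v y - v z - 'd v z (y - z) <= D by apply: D_max; exists y, z.
have := strongly_convex_bregman_ge (dv z Yz) vsc Yy Yz.
have N_ge0 := normv_ge0 normNY (y - z).
move: (NY (y - z)) N_ge0 => N N_ge0 bregman_ge.
have N2_le : N ^+ 2 <= 2 * D / sigma by rewrite ler_pdivlMr //; lra.
by rewrite -(ger0_norm N_ge0) -sqrtr_sqr ler_sqrt // (le_trans _ N2_le) // sqr_ge0.
Qed.

Lemma max_affine_sub_le {R : realType} {n m : nat} {Y : set 'cV[R]_m}
    {g : 'cV[R]_m -> R} {A : 'M[R]_(m, n)} {F : 'cV[R]_n -> R} {x x' : 'cV[R]_n} {y : 'cV[R]_m} :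
  is_max [set dotv (A *m x') y - g y | y in Y] (F x') ->
  Y y -> F x = dotv (A *m x) y - g y ->
  F x - F x' <= dotv (A *m (x - x')) y.
Proof.
move=> [_ F_max] Yy ->.
have : dotv (A *m x') y - g y <= F x' by apply: F_max; exists y.
by rewrite mulmxBr dotvBl; lra.
Qed.

Lemma max_affine_subgradient_gap {R : realType} {n m : nat} {Y : set 'cV[R]_m}
    {g : 'cV[R]_m -> R} {A : 'M[R]_(m, n)} {F : 'cV[R]_n -> R} {x1 G : 'cV[R]_n}
    (x0 : 'cV[R]_n) :
  (forall x, is_max [set dotv (A *m x) y - g y | y in Y] (F x)) ->
  subdiff F x1 G ->
  exists y0 y2, [/\ Y y0, Y y2 &
    F x0 - F x1 - dotv G (x0 - x1) <= dotv (A *m (x0 - x1)) (y0 - y2)].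
Proof.
move=> F_max G_sub; set d := x0 - x1.
have [[y0 Yy0 Fx0] _] := F_max x0.
have [[y2 Yy2 Fx2] _] := F_max (x1 - d).
exists y0, y2; split => //.
have up := max_affine_sub_le (F_max x1) Yy0 (esym Fx0).
have down := max_affine_sub_le (F_max x1) Yy2 (esym Fx2).
have sub := G_sub (x1 - d).
rewrite (_ : x1 - d - x1 = - d) in down sub; last by rewrite addrC addKr.
by rewrite mulmxN dotvNl in down; rewrite dotvNr in sub; rewrite dotvBr; lra.
Qed.

Theorem lemma4p6 (R : realType) (n m : nat)
  (Nx : 'cV[R]_n -> R) (NY : 'cV[R]_m -> R)
  (Y : set 'cV[R]_m) (ghat : 'cV[R]_m -> R) (A : 'M[R]_(m, n))
  (F : 'cV[R]_n -> R) (normA : R)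
  (v : 'cV[R]_m -> R) (sigma D : R) :
  is_norm Nx -> is_norm NY ->
  Y !=set0 -> convex_set Y -> compact Y ->
  {within Y, continuous ghat} -> convex_on Y ghat ->
  (forall x, is_max [set dotv (A *m x) y - ghat y | y in Y] (F x)) ->
  is_max [set r | exists x y, [/\ Nx x <= 1, NY y <= 1 &
                                    r = dotv (A *m x) y]] normA ->
  (forall z, Y z -> differentiable v z) ->
  0 < sigma -> strongly_convex_on Y NY sigma v ->
  is_max [set r | exists y z, [/\ Y y, Y z &
                                    r = v y - v z - 'd v z (y - z)]] D ->
  forall (x0 x1 : 'cV[R]_n) (G : 'cV[R]_n), subdiff F x1 G ->
    F x0 - F x1 - dotv G (x0 - x1) <=
      2 * Num.sqrt (2 * normA ^+ 2 * D / sigma) * Nx (x0 - x1).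
Proof.
(* Nonemptiness, convexity and compactness of [Y] and the regularity of [ghat]
   only ensure that the maximum defining [F] is attained, which is assumed. *)
move=> normNx normNY _ _ _ _ _ F_max normA_max dv sigma_gt0 vsc D_max x0 x1 G G_sub.
have [y0 [y2 [Yy0 Yy2 gap]]] := max_affine_subgradient_gap x0 F_max G_sub.
apply: (le_trans gap); apply: (le_trans (dotv_le_opnorm normNx normNY normA_max _ _)).
have diam := bregman_diam_bound normNY dv sigma_gt0 vsc D_max Yy0 Yy2.
have normA_ge0 := opnorm_ge0 normNx normNY normA_max.
have -> : Num.sqrt (2 * normA ^+ 2 * D / sigma) = normA * Num.sqrt (2 * D / sigma).
  rewrite (_ : 2 * _ * D / sigma = normA ^+ 2 * (2 * D / sigma)); last by ring.
  by rewrite sqrtrM ?sqr_ge0 // sqrtr_sqr ger0_norm.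
have dx_ge0 := normv_ge0 normNx (x0 - x1).
have := ler_wpM2l (mulr_ge0 normA_ge0 dx_ge0) diam.
have : 0 <= normA * Nx (x0 - x1) * Num.sqrt (2 * D / sigma).
  by rewrite !mulr_ge0 ?sqrtr_ge0.
lra.
Qed.
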